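(* Let $X$ be a directed graph whose underlying undirected graph is a tree. Then $X$ is strongly $0$-hyperbolic.
   Context: Directed graphs may have loops and multiple edges. The underlying undirected graph of $X$ has the same vertices and a single undirected edge between $x$ and $y$ whenever $X$ has an edge from $x$ to $y$ or from $y$ to $x$. $d(u,v)$ is the length of a shortest directed path from $u$ to $v$ ($\infty$ if none). Out-ball $\overrightarrow{\mathcal{B}}_r(x)=\{y : d(x,y)\le r\}$, in-ball $\overleftarrow{\mathcal{B}}_r(x)=\{y : d(y,x)\le r\}$, extended to sets by union. A path $[x_0,\dots,x_n]$ is a geodesic if $n=d(x_0,x_n)$. A directed geodesic triangle is an ordered triple $(p,q,r)$ of geodesics with the end of $p$ equal to the start of $q$ and $p\circ q$ having the same start and end as $r$; it is $\delta$-thin if every vertex of $r$ lies in $\overrightarrow{\mathcal{B}}_\delta(p)\cup\overleftarrow{\mathcal{B}}_\delta(q)$, every vertex of $p$ lies in $\overrightarrow{\mathcal{B}}_\delta(r)\cup\overleftarrow{\mathcal{B}}_\delta(q)$, and every vertex of $q$ lies in $\overrightarrow{\mathcal{B}}_\delta(p)\cup\overleftarrow{\mathcal{B}}_\delta(r)$. A directed graph is strongly $\delta$-hyperbolic if all its directed geodesic triangles are $\delta$-thin. *)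

(* A directed graph (loops / multiple edges allowed) is modelled by
   its vertex type V and its adjacency relation E : V -> V -> Prop
   (E x y <-> there is at least one edge from x to y). *)
From Stdlib Require Import List.
Import ListNotations.

Fixpoint is_dpath {V : Type} (E : V -> V -> Prop) (p : list V) : Prop :=
  match p with
  | [] => False
  | [x] => True
  | x :: ((y :: _) as t) => E x y /\ is_dpath E t
  end.

(* p is a directed path from u to v (its length is length p - 1) *)
Definition path_from_to {V : Type} (E : V -> V -> Prop) (p : list V) (u v : V) : Prop :=
  is_dpath E p /\ hd_error p = Some u /\ last p u = v.

Definition dist_le {V : Type} (E : V -> V -> Prop) (u v : V) (r : nat) : Prop :=
  exists p, path_from_to E p u v /\ length p <= S r.

Definition geodesic {V : Type} (E : V -> V -> Prop) (p : list V) : Prop :=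
  exists u v, path_from_to E p u v /\
    forall q, path_from_to E q u v -> length p <= length q.

Definition out_ball {V : Type} (E : V -> V -> Prop) (r : nat) (A : list V) (y : V) : Prop :=
  exists a, In a A /\ dist_le E a y r.
Definition in_ball {V : Type} (E : V -> V -> Prop) (r : nat) (A : list V) (y : V) : Prop :=
  exists a, In a A /\ dist_le E y a r.

Definition geodesic_triangle {V : Type} (E : V -> V -> Prop) (p q r : list V) : Prop :=
  geodesic E p /\ geodesic E q /\ geodesic E r /\
  exists a b c, path_from_to E p a b /\ path_from_to E q b c /\ path_from_to E r a c.

Definition thin_triangle {V : Type} (E : V -> V -> Prop) (d : nat) (p q r : list V) : Prop :=
  (forall y, In y r -> out_ball E d p y \/ in_ball E d q y) /\
  (forall y, In y p -> out_ball E d r y \/ in_ball E d q y) /\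
  (forall y, In y q -> out_ball E d p y \/ in_ball E d r y).

Definition strongly_hyperbolic {V : Type} (E : V -> V -> Prop) (d : nat) : Prop :=
  forall p q r, geodesic_triangle E p q r -> thin_triangle E d p q r.

Definition und {V : Type} (E : V -> V -> Prop) (x y : V) : Prop := E x y \/ E y x.

(* a (simple) undirected graph given by a symmetric relation U is a tree:
   no loops, connected, and no cycle x0 - x1 - ... - x(k-1) - x0 with k >= 3
   distinct vertices *)
Definition is_tree {V : Type} (U : V -> V -> Prop) : Prop :=
  (forall x, ~ U x x) /\
  (forall x y, exists p, path_from_to U p x y) /\
  (forall x t, NoDup (x :: t) -> 2 <= length t -> is_dpath U (x :: t) ->
     ~ U (last t x) x).

(* In a tree a simple walk between two vertices is contained in every walk
   between them: otherwise, leaving the simple walk at some vertex and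
   returning to it later closes a cycle.  A directed geodesic is simple and is
   in particular an undirected walk.  The concatenation of two sides of a
   geodesic triangle, reversed where necessary, is an undirected walk joining
   the endpoints of the third side, so every vertex of the third side lies on
   one of the other two sides, i.e. within distance 0 of it. *)

From Stdlib Require Import List Lia Classical.
Import ListNotations.

(* [walk R x p y]: [p] is a nonempty [R]-path from [x] to [y], described by
   its endpoints instead of by [hd_error] and [last]. *)
Inductive walk {V : Type} (R : V -> V -> Prop) : V -> list V -> V -> Prop :=
| walk_one : forall x, walk R x [x] x
| walk_step : forall x y p z, R x y -> walk R y p z -> walk R x (x :: p) z.

Lemma last_cons_default {V : Type} (x : V) p d d' :
  last (x :: p) d = last (x :: p) d'.
Proof.
  revert x. induction p as [|y p IH]; intros x; [reflexivity|].
  destruct p; [reflexivity|]. apply (IH y).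
Qed.

Section Walks.
Context {V : Type} (R : V -> V -> Prop).

Lemma walk_of_path_from_to p u v : path_from_to R p u v -> walk R u p v.
Proof.
  revert u. induction p as [|x p IH]; intros u [Hp [Hhd Hlast]]; [contradiction|].
  injection Hhd as ->. destruct p as [|y p].
  - simpl in Hlast. subst. constructor.
  - destruct Hp as [Hxy Hp]. apply walk_step with y; [exact Hxy|].
    apply IH. split; [exact Hp|split; [reflexivity|]].
    rewrite <- Hlast. simpl. apply last_cons_default.
Qed.

Lemma walk_head u p v : walk R u p v -> p = u :: tl p.
Proof. destruct 1; reflexivity. Qed.

Lemma path_from_to_of_walk p u v : walk R u p v -> path_from_to R p u v.
Proof.
  induction 1 as [x|x y p z Hxy Hw [Hp [Hhd Hlast]]].
  - repeat split.
  - rewrite (walk_head _ _ _ Hw) in *. repeat split; [assumption|assumption|].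
    rewrite <- Hlast. simpl. apply last_cons_default.
Qed.

Lemma walk_last u p v : walk R u p v -> forall d, last p d = v.
Proof. intros Hw d. destruct (path_from_to_of_walk _ _ _ Hw) as [_ [Hhd <-]].
  rewrite (walk_head _ _ _ Hw). apply last_cons_default. Qed.

Lemma walk_end_In u p v : walk R u p v -> In v p.
Proof. induction 1; simpl; auto. Qed.

Lemma walk_cat a p b q c : walk R a p b -> walk R b q c -> walk R a (p ++ tl q) c.
Proof.
  induction 1 as [x|x y p z Hxy Hw IH]; intros Hq; simpl.
  - rewrite <- (walk_head _ _ _ Hq). exact Hq.
  - econstructor; eauto.
Qed.

Lemma walk_rev a p b : (forall x y, R x y -> R y x) -> walk R a p b -> walk R b (rev p) a.
Proof.
  intros Hsym. induction 1 as [x|x y p z Hxy Hw IH]; [constructor|].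
  change (rev (x :: p)) with (rev p ++ tl [y; x]).
  apply walk_cat with y; [exact IH|]. apply walk_step with x; [auto|constructor].
Qed.

Lemma walk_suffix p x q u v : walk R u (p ++ x :: q) v -> walk R x (x :: q) v.
Proof.
  revert u. induction p as [|z p IH]; intros u Hw; simpl in Hw.
  - injection (walk_head _ _ _ Hw) as ->. exact Hw.
  - inversion Hw; subst; [destruct p; discriminate|eauto].
Qed.

Lemma walk_length_ge2 x p y : walk R x p y -> x <> y -> 2 <= length p.
Proof.
  destruct 1 as [x|x y p z _ Hw]; intros Hne; [congruence|].
  rewrite (walk_head _ _ _ Hw). simpl. lia.
Qed.

Lemma walk_shorten x p y : walk R x p y ->
  exists p', walk R x p' y /\ NoDup p' /\ incl p' p /\
    (p' = p \/ length p' < length p).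
Proof.
  induction 1 as [x|x z p y Hxz Hw IH].
  - exists [x]. repeat split; [constructor| |apply incl_refl|left; reflexivity].
    constructor; [simpl; tauto|constructor].
  - destruct IH as [p1 [Hw1 [Hnd [Hincl Hlen]]]].
    destruct (classic (In x p1)) as [Hin|Hin].
    + (* cut the loop back to [x] *)
      apply in_split in Hin. destruct Hin as [l1 [l2 ->]].
      exists (x :: l2). repeat split.
      * eapply walk_suffix; eauto.
      * eapply NoDup_app_remove_l; eauto.
      * intros w [<-|Hw2]; [now left|right].
        apply Hincl, in_or_app. right; right; exact Hw2.
      * right. rewrite length_app in Hlen. simpl in *.
        destruct Hlen as [<-|Hlen]; rewrite ?length_app; simpl; lia.
    + exists (x :: p1). repeat split.
      * econstructor; eauto.
      * constructor; auto.
      * apply incl_cons; [now left|]. apply incl_tl; auto.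
      * destruct Hlen as [->|Hlen]; [now left|right; simpl; lia].
Qed.

Lemma walk_last_exit u p c a : walk R u p c -> In a p -> a <> c ->
  exists y q, R a y /\ walk R y q c /\ ~ In a q /\ incl q p.
Proof.
  induction 1 as [x|x z p y Hxz Hw IH]; intros Ha Hne.
  - destruct Ha as [<-|[]]. congruence.
  - destruct (classic (In a p)) as [Hp|Hp].
    + destruct (IH Hp Hne) as [y' [q [Hay [Hq [Haq Hincl]]]]].
      exists y', q. repeat split; auto. apply incl_tl; auto.
    + destruct Ha as [<-|Ha]; [|contradiction].
      exists z, p. repeat split; auto. apply incl_tl, incl_refl.
Qed.

Lemma walk_mono (R' : V -> V -> Prop) u p v :
  (forall x y, R x y -> R' x y) -> walk R u p v -> walk R' u p v.
Proof. intros HR. induction 1; econstructor; eauto. Qed.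

End Walks.

Section Trees.
Context {V : Type} (U : V -> V -> Prop).
Hypothesis U_sym : forall x y, U x y -> U y x.
Hypothesis U_acyclic : forall x t, NoDup (x :: t) -> 2 <= length t ->
  is_dpath U (x :: t) -> ~ U (last t x) x.

Lemma simple_walk_incl s a c : walk U a s c -> NoDup s ->
  forall w, walk U a w c -> incl s w.
Proof.
  induction 1 as [a|a x s c Hax Hs IH]; intros Hnd w Hw.
  - intros v [<-|[]]. rewrite (walk_head _ _ _ _ Hw). now left.
  - inversion Hnd as [|? ? Has Hnd']; subst.
    assert (Hac : a <> c) by (intros ->; eauto using walk_end_In).
    assert (Haw : In a w) by (rewrite (walk_head _ _ _ _ Hw); now left).
    destruct (walk_last_exit _ _ _ _ _ Hw Haw Hac) as [y [q [Hay [Hq [Haq Hincl]]]]].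
    destruct (classic (y = x)) as [->|Hyx].
    { apply incl_cons; [assumption|]. apply incl_tran with q; auto. }
    exfalso.
    (* [x ~> c ~> y] avoids [a], and the edges [a - x], [y - a] close a cycle. *)
    destruct (walk_shorten _ _ _ _ (walk_cat _ _ _ _ _ _ Hs (walk_rev _ _ _ _ U_sym Hq)))
      as [t [Ht [Hndt [Hinclt _]]]].
    assert (Hat : ~ In a t).
    { intros Hin. apply Hinclt, in_app_or in Hin as [Hin|Hin]; [contradiction|].
      apply Haq, in_rev. destruct (rev q); [contradiction|right; exact Hin]. }
    apply (U_acyclic a t).
    + constructor; assumption.
    + eapply walk_length_ge2; eauto.
    + apply (path_from_to_of_walk U (a :: t) a y), walk_step with x; assumption.
    + rewrite (walk_last _ _ _ _ Ht). auto.
Qed.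

End Trees.

Lemma geodesic_NoDup {V : Type} (E : V -> V -> Prop) p : geodesic E p -> NoDup p.
Proof.
  intros [u [v [Hp Hmin]]]. apply walk_of_path_from_to in Hp.
  destruct (walk_shorten _ _ _ _ Hp) as [p' [Hw [Hnd [_ [<-|Hlen]]]]]; [assumption|].
  apply path_from_to_of_walk, Hmin in Hw. lia.
Qed.

Lemma tree_geodesic_incl_walk {V : Type} (E : V -> V -> Prop) p a c w :
  is_tree (und E) -> geodesic E p -> path_from_to E p a c ->
  walk (und E) a w c -> incl p w.
Proof.
  intros [_ [_ Hacyc]] Hgeo Hp Hw.
  apply (simple_walk_incl (und E)) with a c; auto.
  - unfold und. tauto.
  - apply walk_mono with E; [unfold und; tauto|]. apply walk_of_path_from_to, Hp.
  - apply geodesic_NoDup with E, Hgeo.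
Qed.

Lemma balls_0_of_In {V : Type} (E : V -> V -> Prop) A y :
  In y A -> out_ball E 0 A y /\ in_ball E 0 A y.
Proof.
  intros Hy. assert (Hyy : dist_le E y y 0) by (exists [y]; repeat split; simpl; lia).
  split; exists y; auto.
Qed.

Lemma In_cat_tl {V : Type} (p q : list V) y : In y (p ++ tl q) -> In y p \/ In y q.
Proof.
  intros [Hy|Hy]%in_app_or; [now left|right].
  destruct q; [contradiction|right; exact Hy].
Qed.

Theorem proposition2p4 (V : Type) (E : V -> V -> Prop) :
  is_tree (und E) -> strongly_hyperbolic E 0.
Proof.
  intros Htree p q r [Gp [Gq [Gr [a [b [c [Hp [Hq Hr]]]]]]]].
  assert (und_sym : forall x y, und E x y -> und E y x) by (unfold und; tauto).
  assert (Wund : forall l u v, path_from_to E l u v -> walk (und E) u l v).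
  { intros l u v Hl. apply walk_mono with E; [unfold und; tauto|].
    apply walk_of_path_from_to, Hl. }
  split; [|split]; intros y Hy.
  - assert (Hpq := walk_cat _ _ _ _ _ _ (Wund _ _ _ Hp) (Wund _ _ _ Hq)).
    destruct (In_cat_tl p q y (tree_geodesic_incl_walk E r a c _ Htree Gr Hr Hpq y Hy))
      as [H|H]; [left|right]; apply balls_0_of_In; exact H.
  - assert (Hrq := walk_cat _ _ _ _ _ _ (Wund _ _ _ Hr)
                     (walk_rev _ _ _ _ und_sym (Wund _ _ _ Hq))).
    destruct (In_cat_tl r (rev q) y (tree_geodesic_incl_walk E p a b _ Htree Gp Hp Hrq y Hy))
      as [H|H%in_rev]; [left|right]; apply balls_0_of_In; exact H.
  - assert (Hpr := walk_cat _ _ _ _ _ _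
                     (walk_rev _ _ _ _ und_sym (Wund _ _ _ Hp)) (Wund _ _ _ Hr)).
    destruct (In_cat_tl (rev p) r y (tree_geodesic_incl_walk E q b c _ Htree Gq Hq Hpr y Hy))
      as [H%in_rev|H]; [left|right]; apply balls_0_of_In; exact H.
Qed.
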